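(* Let $\mathsf V$ be a variety. If $\mathsf V$ has unitary e-generalization $2$-type, then $\mathsf V$ has unitary e-generalization type.
   Context: Let $\mathsf V$ be a variety of algebras of a fixed type. For a set $X$, $\mathbf F_{\mathsf V}(X)$ denotes the free algebra of $\mathsf V$ over $X$; its elements are called terms (terms are identified up to the equational theory of $\mathsf V$). A substitution is a homomorphism between free algebras of $\mathsf V$. A symbolic e-generalization problem for $\mathsf V$ is a finite multiset $\mathbf t=\{t_1,\dots,t_m\}$ ($m\ge 1$) of elements of $\mathbf F_{\mathsf V}(X)$ for some finite $X$. A solution (generalizer) of $\mathbf t$ is a term $s\in\mathbf F_{\mathsf V}(Y)$, where $Y$ is the set of variables of $s$, such that there exist substitutions $\sigma_1,\dots,\sigma_m$ with $\sigma_k(s)=t_k$ in $\mathsf V$ for all $k$. For terms $s,u$ write $s\preceq u$ ($s$ is less general than $u$) iff there is a substitution $\sigma$ with $\sigma(u)=s$; this is a preorder on the set of solutions of $\mathbf t$, and $(\mathscr S(\mathbf t),\preceq)$ denotes the associated poset of classes of equally general solutions. In a poset $(P,\le)$ a minimal complete set is a subset $M\subseteq P$ such that every $p\in P$ has some $a\in M$ with $a\le p$, and no two distinct elements of $M$ are comparable. The e-generalization type of $\mathbf t$ is unitary if $(\mathscr S(\mathbf t),\preceq)$ has a minimal complete set of cardinality 1, finitary if it has one of finite cardinality greater than 1, infinitary if it has one of infinite cardinality, and nullary if it has none. For $m\in\mathbb N\setminus\{0\}$, the e-generalization $m$-type of $\mathsf V$ is the worst type occurring among problems for $\mathsf V$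 whose multiset has cardinality at most $m$, where the order from best to worst is unitary $>$ finitary $>$ infinitary $>$ nullary; the e-generalization type of $\mathsf V$ is the worst type among all its problems. *)

From mathcomp Require Import all_boot.
From Stdlib Require List.

Set Implicit Arguments.
Unset Strict Implicit.
Unset Printing Implicit Defensive.

Inductive term (op : Type) (ar : op -> nat) (X : Type) : Type :=
  | Var : X -> term ar X
  | App : forall f : op, ('I_(ar f) -> term ar X) -> term ar X.

Arguments Var {op ar X} x.
Arguments App {op ar X} f args.

(* Every homomorphism F(X) -> F(Y) between free algebras is of this    *)
(* form (it is determined by the images of the free generators).       *)
Fixpoint tsubst {op : Type} {ar : op -> nat} {X Y : Type}
  (sigma : X -> term ar Y) (t : term ar X) : term ar Y :=
  match t with
  | Var x => sigma x
  | App f a => App f (fun i => tsubst sigma (a i))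
  end.

(* A variety, given (Birkhoff) by its type and a set of defining        *)
Record variety := Variety {
  v_op : Type;
  v_ar : v_op -> nat;
  v_ax : term v_ar nat -> term v_ar nat -> Prop }.

Definition vterm (V : variety) (X : Type) := term (@v_ar V) X.

(* Equational theory of V on terms over X: the fully invariant           *)
(* congruence generated by the identities.  [veq V s t] means that        *)
(* s = t holds in the free algebra F_V(X).                               *)
Inductive veq (V : variety) (X : Type) : vterm V X -> vterm V X -> Prop :=
  | veq_ax : forall l r (sigma : nat -> vterm V X),
      v_ax l r -> veq (tsubst sigma l) (tsubst sigma r)
  | veq_refl : forall t, veq t t
  | veq_sym : forall s t, veq s t -> veq t s
  | veq_trans : forall s t u, veq s t -> veq t u -> veq s u
  | veq_cong : forall (f : v_op V) (a b : 'I_(v_ar f) -> vterm V X),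
      (forall i, veq (a i) (b i)) -> veq (App f a) (App f b).

(* A problem is a finite multiset (here: a nonempty list, order being  *)
(* irrelevant) of terms over a finite set X of variables.  Generalizers *)
(* are terms over the countable variable supply nat (every term has     *)
(* finitely many variables, so its variable set Y embeds into nat).     *)
Definition is_generalizer (V : variety) (X : finType) (t : seq (vterm V X))
  (s : vterm V nat) : Prop :=
  forall u, List.In u t -> exists sigma : nat -> vterm V X, veq (tsubst sigma s) u.

Definition less_general (V : variety) (s u : vterm V nat) : Prop :=
  exists sigma : nat -> vterm V nat, veq (tsubst sigma u) s.

(* Minimal complete set of the poset of classes of solutions, given by   *)
(* one representative per class: complete, and any comparability        *)
(* between members forces equality (so distinct members lie in distinct, *)
(* incomparable classes; the cardinality of M is that of the set of      *)
(* classes it represents).                                               *)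
Definition min_complete_set (V : variety) (X : finType) (t : seq (vterm V X))
  (M : vterm V nat -> Prop) : Prop :=
  (forall a, M a -> is_generalizer t a) /\
  (forall p, is_generalizer t p -> exists2 a, M a & less_general a p) /\
  (forall a b, M a -> M b -> less_general a b -> a = b).

Inductive gtype := Nullary | Infinitary | Finitary | Unitary.

(* order from worst (0) to best (3) *)
Definition gtype_rank (g : gtype) : nat :=
  match g with Nullary => 0 | Infinitary => 1 | Finitary => 2 | Unitary => 3 end.

Definition set_card_one {T : Type} (M : T -> Prop) : Prop :=
  exists a, forall b, M b <-> b = a.

Definition set_finite_card_gt1 {T : Type} (M : T -> Prop) : Prop :=
  exists l : list T, List.NoDup l /\ (1 < length l)%coq_nat /\ (forall b, M b <-> List.In b l).

Definition set_infinite {T : Type} (M : T -> Prop) : Prop :=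
  ~ exists l : list T, forall b, M b -> List.In b l.

Definition has_gtype (V : variety) (X : finType) (t : seq (vterm V X))
  (g : gtype) : Prop :=
  match g with
  | Unitary => exists M, min_complete_set t M /\ set_card_one M
  | Finitary => exists M, min_complete_set t M /\ set_finite_card_gt1 M
  | Infinitary => exists M, min_complete_set t M /\ set_infinite M
  | Nullary => ~ exists M, min_complete_set t M
  end.

Definition worst_gtype (V : variety) (sz : nat -> Prop) (g : gtype) : Prop :=
  (exists (X : finType) (t : seq (vterm V X)), sz (size t) /\ has_gtype t g) /\
  (forall (X : finType) (t : seq (vterm V X)) (g' : gtype),
      sz (size t) -> has_gtype t g' -> gtype_rank g <= gtype_rank g').

Definition egen_mtype (V : variety) (m : nat) (g : gtype) : Prop :=
  worst_gtype V (fun k => 0 < k <= m) g.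

Definition egen_type (V : variety) (g : gtype) : Prop :=
  worst_gtype V (fun k => 0 < k) g.

From mathcomp Require Import all_boot.
From Stdlib Require Import Classical ClassicalEpsilon FunctionalExtensionality.

Set Implicit Arguments.
Unset Strict Implicit.

(* A problem is unitary exactly when it has a least general generalizer.
   If every problem {t1, t2} has one, then so does every {t1, ..., tn}:
   taking a least generalizer a of {t2, ..., tn}, with its finitely many
   variables renamed apart from those of t1, a least generalizer of {a, t1}
   is one of {t1, ..., tn}, because a generalizes {t2, ..., tn} and every
   generalizer of {t2, ..., tn} is more general than a. *)

Lemma tsubst_comp (op : Type) (ar : op -> nat) (X Y Z : Type)
    (s1 : X -> term ar Y) (s2 : Y -> term ar Z) (t : term ar X) :
  tsubst s2 (tsubst s1 t) = tsubst (fun x => tsubst s2 (s1 x)) t.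
Proof.
elim: t => [x|f a IH] //=; congr (App f _).
by apply: functional_extensionality => i; apply: IH.
Qed.

Lemma tsubst_Var (op : Type) (ar : op -> nat) (X : Type) (t : term ar X) :
  tsubst Var t = t.
Proof.
elim: t => [x|f a IH] //=; congr (App f _).
by apply: functional_extensionality => i; apply: IH.
Qed.

Fixpoint tvar_bound (op : Type) (ar : op -> nat) (t : term ar nat) : nat :=
  match t with
  | Var k => k.+1
  | App f a => \max_i tvar_bound (a i)
  end.

Lemma tsubst_eq_on (op : Type) (ar : op -> nat) (Y : Type)
    (s1 s2 : nat -> term ar Y) (t : term ar nat) :
  (forall k, k < tvar_bound t -> s1 k = s2 k) -> tsubst s1 t = tsubst s2 t.
Proof.
elim: t => [k|f a IH] /= eq_s; first exact: eq_s.
congr (App f _); apply: functional_extensionality => i; apply: IH => k lt_k.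
by apply: eq_s; apply: leq_trans lt_k (leq_bigmax i).
Qed.

Lemma veq_subst (V : variety) (X Y : Type) (r : X -> vterm V Y) s t :
  veq s t -> veq (tsubst r s) (tsubst r t).
Proof.
elim=> {s t} [l q sigma ax | t | s t _ IH | s t u _ IH1 _ IH2 | f a b _ IH] /=.
- by rewrite !tsubst_comp; apply: veq_ax.
- exact: veq_refl.
- exact: veq_sym.
- exact: veq_trans IH1 IH2.
- by apply: veq_cong => i; apply: IH.
Qed.

Lemma less_general_trans (V : variety) (a b c : vterm V nat) :
  less_general a b -> less_general b c -> less_general a c.
Proof.
move=> [s1 s1b] [s2 s2c]; exists (fun k => tsubst s1 (s2 k)).
by rewrite -tsubst_comp; apply: veq_trans (veq_subst s1 s2c) s1b.
Qed.

Lemma is_generalizer_Var (V : variety) (X : finType) (t : seq (vterm V X)) k :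
  is_generalizer t (Var k).
Proof. by move=> u _; exists (fun _ => u); apply: veq_refl. Qed.

Definition least_generalizer (V : variety) (X : finType) (t : seq (vterm V X))
    (a : vterm V nat) : Prop :=
  is_generalizer t a /\ forall p, is_generalizer t p -> less_general a p.

Lemma set_card_one_finite (T : Type) (M : T -> Prop) :
  set_card_one M -> ~ set_infinite M.
Proof. by move=> [a Ma] []; exists [:: a] => b /Ma ->; left. Qed.

Lemma set_card_one_not_gt1 (T : Type) (M : T -> Prop) :
  set_card_one M -> ~ set_finite_card_gt1 M.
Proof.
move=> [a Ma] [l [nd_l [len_l Ml]]].
case: l nd_l len_l Ml => [|b [|c l]] nd_l /leP // _ Ml.
have [eq_ba eq_ca] : b = a /\ c = a by split; apply/Ma/Ml; rewrite /=; tauto.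
move/List.NoDup_cons_iff: nd_l => [+ _]; apply; left.
by rewrite eq_ba eq_ca.
Qed.

Lemma set_card_one_of_bounded (T : Type) (M : T -> Prop) a :
  ~ set_infinite M -> ~ set_finite_card_gt1 M -> M a -> set_card_one M.
Proof.
move=> /NNPP [l Ml] not_gt1 Ma; exists a => b; split=> [Mb|-> //].
apply: NNPP => neq_ba; apply: not_gt1.
pose inM x := if excluded_middle_informative (M x) then true else false.
pose l' := List.nodup (fun x y => excluded_middle_informative (x = y))
                      (List.filter inM l).
have l'E x : M x <-> List.In x l'.
  rewrite List.nodup_In List.filter_In /inM.
  case: excluded_middle_informative => Mx; split=> [|[] //]; last by [].
  by move=> _; split=> //; apply: Ml.
have nd_ab : List.NoDup [:: a; b].
  by constructor; [case=> [/neq_ba|[]] | constructor; [case | constructor]].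
exists l'; split; first exact: List.NoDup_nodup.
split=> //; apply: List.NoDup_incl_length nd_ab _.
by move=> x /= [<-|[<-|[]]]; apply/l'E.
Qed.

Section LeastGeneralizer.

Variables (V : variety) (X : finType) (t : seq (vterm V X)).

Lemma least_generalizer_card_one a M :
  least_generalizer t a -> min_complete_set t M -> set_card_one M.
Proof.
move=> [gen_a least_a] [gen_M [complete_M antichain_M]].
have [b Mb le_ba] := complete_M _ gen_a.
exists b => c; split=> [Mc|-> //]; apply/esym/antichain_M => //.
exact: less_general_trans le_ba (least_a _ (gen_M _ Mc)).
Qed.

Lemma least_generalizer_gtype a g :
  least_generalizer t a -> has_gtype t g -> g = Unitary.
Proof.
move=> lg_a; case: g => //= [[]|[M [mcs_M]]|[M [mcs_M]]].
- exists (fun b => b = a); split=> [b -> | ]; first exact: lg_a.1.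
  split=> [p gen_p | b c -> -> //]; exists a => //; exact: lg_a.2.
- by move/(set_card_one_finite (least_generalizer_card_one lg_a mcs_M)).
- by move/(set_card_one_not_gt1 (least_generalizer_card_one lg_a mcs_M)).
Qed.

Lemma exists_least_generalizer :
  (forall g, has_gtype t g -> g = Unitary) -> exists a, least_generalizer t a.
Proof.
move=> only_unitary.
have [M mcs_M] : exists M, min_complete_set t M.
  by apply: NNPP => no_mcs; have := only_unitary Nullary no_mcs.
have [gen_M [complete_M _]] := mcs_M.
have [b Mb _] := complete_M _ (is_generalizer_Var 0).
have [c Mc] : set_card_one M.
  apply: set_card_one_of_bounded Mb => [inf_M | gt1_M].
  - by have := only_unitary Infinitary (ex_intro _ M (conj mcs_M inf_M)).
  - by have := only_unitary Finitary (ex_intro _ M (conj mcs_M gt1_M)).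
exists c; split=> [|p /complete_M [d /Mc -> //]].
by apply/gen_M/Mc.
Qed.

End LeastGeneralizer.

Section ConsStep.

Variables (V : variety) (X : finType) (u : vterm V X) (t : seq (vterm V X)).
Variable a : vterm V nat.

(* The [.+1] only makes [inord] available; [a] uses the variables below
   [tvar_bound a]. *)
Let Y : finType := ('I_(tvar_bound a).+1 + X)%type.
Let rename_a (k : nat) : vterm V Y := Var (inl (inord k)).
Let rename_u (x : X) : vterm V Y := Var (inr x).
Let a' := tsubst rename_a a.
Let u' := tsubst rename_u u.

Let unrename (tau : nat -> vterm V X) (y : Y) : vterm V X :=
  match y with inl i => tau i | inr x => Var x end.

Let unrename_a tau : tsubst (unrename tau) a' = tsubst tau a.
Proof.
rewrite tsubst_comp; apply: tsubst_eq_on => k lt_k /=.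
by rewrite inordK // ltnS ltnW.
Qed.

Let unrename_u tau : tsubst (unrename tau) u' = u.
Proof. by rewrite tsubst_comp tsubst_Var. Qed.

Let generalizer_cons_of_pair b :
  is_generalizer t a -> is_generalizer [:: a'; u'] b ->
  is_generalizer (u :: t) b.
Proof.
move=> gen_a gen_b w /= [<-|t_w].
- have [sigma sigma_b] := gen_b u' (or_intror (or_introl erefl)).
  exists (fun k => tsubst (unrename (fun=> u)) (sigma k)).
  have := veq_subst (unrename (fun=> u)) sigma_b.
  by rewrite unrename_u tsubst_comp.
- have [tau tau_a] := gen_a w t_w.
  have [sigma sigma_b] := gen_b a' (or_introl erefl).
  exists (fun k => tsubst (unrename tau) (sigma k)).
  rewrite -tsubst_comp; apply: veq_trans tau_a.
  by rewrite -unrename_a; apply: veq_subst.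
Qed.

Let pair_generalizer_of_cons p :
  less_general a p -> is_generalizer (u :: t) p -> is_generalizer [:: a'; u'] p.
Proof.
move=> [sigma sigma_p] gen_p w /= [<-|[<-|[]]].
- exists (fun k => tsubst rename_a (sigma k)).
  by rewrite -tsubst_comp; apply: veq_subst.
- have [tau tau_p] := gen_p u (or_introl erefl).
  exists (fun k => tsubst rename_u (tau k)).
  by rewrite -tsubst_comp; apply: veq_subst.
Qed.

Lemma least_generalizer_cons :
  (forall (Z : finType) (s : seq (vterm V Z)), size s = 2 ->
     exists b, least_generalizer s b) ->
  least_generalizer t a -> exists b, least_generalizer (u :: t) b.
Proof.
move=> lg_pairs [gen_a least_a].
have [b [gen_b least_b]] := lg_pairs _ [:: a'; u'] erefl.
exists b; split; first exact: generalizer_cons_of_pair.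
move=> p gen_p; apply/least_b/pair_generalizer_of_cons => //.
by apply: least_a => w t_w; apply: gen_p; right.
Qed.

End ConsStep.

Lemma least_generalizer_exists (V : variety) :
  (forall (Z : finType) (s : seq (vterm V Z)), 0 < size s <= 2 ->
     exists b, least_generalizer s b) ->
  forall (X : finType) (t : seq (vterm V X)), 0 < size t ->
  exists a, least_generalizer t a.
Proof.
move=> lg_small X; elim=> [|u [|w t] IH] // _; first exact: lg_small.
have [a lg_a] := IH erefl.
apply: least_generalizer_cons lg_a => Z s size_s.
by apply: lg_small; rewrite size_s.
Qed.

Theorem proposition2p7 (V : variety) :
  egen_mtype V 2 Unitary -> egen_type V Unitary.
Proof.
move=> [[X [t [/andP[t_gt0 _] unit_t]]] worst2]; split; first by exists X, t.
have lg_small (Z : finType) (s : seq (vterm V Z)) : 0 < size s <= 2 ->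
    exists b, least_generalizer s b.
  move=> size_s; apply: exists_least_generalizer.
  by case=> /(worst2 _ _ _ size_s).
move=> Y s g s_gt0 gtype_g.
have [a lg_a] := least_generalizer_exists lg_small s_gt0.
by rewrite (least_generalizer_gtype lg_a gtype_g).
Qed.
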